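(* Let $n\ge1$, $d\ge1$, and let $CC(n,d)=\mathrm{conv}\{\overline{\alpha}_L: L\text{ a corner cut staircase in }d\text{ dimensions of size }n\}$ be the corner cut polytope, where $\overline{\alpha}_L=\sum_{\alpha\in L}\alpha$. Then: (i) for each $i$, the intersection of $CC(n,d)$ with the $i$-th coordinate axis is the point $\binom{n}{2}e_i$ (where $e_i$ is the $i$-th standard basis vector); (ii) if $n=\binom{k+d-1}{d}$ for some integer $k\ge1$, then the corner cut polytope is pointed, in the sense that the staircase of all exponents of total degree at most $k-1$ is a corner cut of size $n$ whose point $\overline{\alpha}_L$ is a vertex of $CC(n,d)$.
   Context: A staircase is a finite set $L\subset\mathbb{Z}^d_{\ge0}$ such that $\alpha\in L$ and $\beta\le\alpha$ componentwise imply $\beta\in L$. A staircase $L$ is a corner cut if there is a $(d-1)$-dimensional affine hyperplane separating $L$ from its complement $\mathbb{Z}^d_{\ge0}\setminus L$. *)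

From HB Require Import structures.
From mathcomp Require Import all_boot all_order all_algebra.
From mathcomp Require Import finmap.
From mathcomp Require Import reals.

Set Implicit Arguments.
Unset Strict Implicit.
Unset Printing Implicit Defensive.

Import Order.TTheory GRing.Theory Num.Theory.
Local Open Scope fset_scope.
Local Open Scope ring_scope.

Definition exponent (d : nat) := {ffun 'I_d -> nat}.

Definition staircase (d : nat) (L : {fset exponent d}) : Prop :=
  forall a b : exponent d, a \in L -> (forall i, (b i <= a i)%N) -> b \in L.

Definition lin (R : realType) (d : nat) (c : 'I_d -> R) (a : exponent d) : R :=
  \sum_(i < d) c i * (a i)%:R.

Definition corner_cut (R : realType) (d : nat) (L : {fset exponent d}) : Prop :=
  staircase L /\
  exists (c : 'I_d -> R) (b : R),
    (exists i, c i != 0) /\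
    (forall a : exponent d, a \in L -> lin c a < b) /\
    (forall a : exponent d, a \notin L -> b < lin c a).
Arguments corner_cut R d L : clear implicits.

Definition alphabar (R : realType) (d : nat) (L : {fset exponent d}) : 'rV[R]_d :=
  \row_(i < d) \sum_(a <- L) ((a i)%:R : R).
Arguments alphabar R d L : clear implicits.

Definition in_CC (R : realType) (n d : nat) (x : 'rV[R]_d) : Prop :=
  exists (m : nat) (Ls : 'I_m -> {fset exponent d}) (w : 'I_m -> R),
    (forall j, corner_cut R d (Ls j) /\ #|` Ls j| = n) /\
    (forall j, 0 <= w j) /\
    \sum_(j < m) w j = 1 /\
    x = \sum_(j < m) w j *: alphabar R d (Ls j).

Arguments in_CC R n d x : clear implicits.

Definition rdot (R : realType) (d : nat) (c x : 'rV[R]_d) : R :=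
  \sum_(i < d) c 0 i * x 0 i.

Definition is_vertex_CC (R : realType) (n d : nat) (v : 'rV[R]_d) : Prop :=
  in_CC R n d v /\
  exists c : 'rV[R]_d,
    forall x, in_CC R n d x -> x != v -> rdot c v < rdot c x.

Arguments is_vertex_CC R n d v : clear implicits.

From HB Require Import structures.
From mathcomp Require Import all_boot all_order all_algebra.
From mathcomp Require Import finmap.
From mathcomp Require Import reals.
From mathcomp Require Import lra.

Set Implicit Arguments.
Unset Strict Implicit.
Unset Printing Implicit Defensive.

Import Order.TTheory GRing.Theory Num.Theory.
Local Open Scope fset_scope.
Local Open Scope ring_scope.

(* (i) The points alphabar L have nonnegative coordinates, so a convex
   combination lying on the i-th axis only involves corner cuts L contained in
   that axis; the only staircase of size n there is {0, e_i, ..., (n-1) e_i},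
   whose point is C(n, 2) e_i.
   (ii) The staircase of total degree < k is the level set of the total degree,
   so exchanging any of its elements for outside ones strictly increases the
   total degree: its point is the unique minimiser of x |-> x_1 + ... + x_d on
   CC(n, d). *)

(* The hyperplane w . x = m + 1/2 separates the level set from its complement. *)
Lemma corner_cut_level (R : realType) d (w : 'I_d -> nat) (m : nat)
    (L : {fset exponent d}) :
  (exists i, w i != 0%N) ->
  (forall a, (a \in L) = (\sum_i w i * a i <= m)%N) ->
  corner_cut R d L.
Proof.
move=> [i wi_neq0] memL; split.
  move=> a b; rewrite !memL => a_m le_ba; apply: leq_trans a_m.
  by apply: leq_sum => j _; rewrite leq_mul.
exists (fun j => (w j)%:R), (m%:R + 2^-1); split.
  by exists i; rewrite pnatr_eq0.
have lin_w a : lin (fun j => (w j)%:R) a = (\sum_i w i * a i)%N%:R :> R.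
  by rewrite /lin natr_sum; apply: eq_bigr => j _; rewrite natrM.
have half_gt0 : (0 : R) < 2^-1 by rewrite invr_gt0 ltr0n.
have half_lt1 : (2^-1 : R) < 1 by rewrite invf_lt1 ?ltr0n // ltr1n.
split=> a; rewrite lin_w memL.
  by rewrite -(ler_nat R); lra.
by rewrite -ltnNge -(ler_nat R) -addn1 natrD; lra.
Qed.

(* Elements of M outside L cost more than m, elements of L outside M at most m,
   and there are equally many of each. *)
Lemma sum_lt_level_set (T : choiceType) (f : T -> nat) (m : nat)
    (L M : {fset T}) :
  (forall a, (a \in L) = (f a <= m)%N) -> #|` M| = #|` L| -> M != L ->
  (\sum_(a <- L) f a < \sum_(a <- M) f a)%N.
Proof.
move=> memL card_ML neq_ML.
have split_sum (X Y : {fset T}) :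
    (\sum_(a <- X) f a = \sum_(a <- X `&` Y) f a + \sum_(a <- X `\` Y) f a)%N.
  by rewrite (big_fsetID _ (mem Y)); congr addn; apply: eq_fbigl => a;
    rewrite !inE // andbC.
have card_D : #|` M `\` L| = #|` L `\` M|.
  by rewrite !cardfsD fsetIC card_ML.
have lt_D : (0 < #|` M `\` L|)%N.
  rewrite cardfs_gt0; apply: contra neq_ML => /eqP ML0.
  by rewrite eqEfcard card_ML leqnn andbT -fsetD_eq0 ML0.
rewrite (split_sum L M) (split_sum M L) fsetIC ltn_add2l.
have sum_const (X : {fset T}) c : (\sum_(a <- X) c = #|` X| * c)%N.
  by rewrite big_const_seq count_predT iter_addn_0 mulnC.
apply: (@leq_ltn_trans (#|` L `\` M| * m)).
  rewrite -sum_const big_seq [X in (_ <= X)%N]big_seq; apply: leq_sum => a.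
  by rewrite in_fsetD memL => /andP[].
apply: (@leq_trans (#|` M `\` L| * m.+1)).
  by rewrite card_D ltn_pmul2l // -card_D.
rewrite -sum_const big_seq [X in (_ <= X)%N]big_seq; apply: leq_sum => a.
by rewrite in_fsetD memL ltnNge => /andP[].
Qed.

Lemma in_CC_alphabar (R : realType) n d (L : {fset exponent d}) :
  corner_cut R d L -> #|` L| = n -> in_CC R n d (alphabar R d L).
Proof.
move=> ccL cardL; exists 1%N, (fun=> L), (fun=> 1).
by rewrite !big_ord1 scale1r; do !split => //; exact: ler01.
Qed.

Lemma convex_comb_const (R : realType) d m (w : 'I_m -> R) (V : 'I_m -> 'rV[R]_d) v :
  \sum_(l < m) w l = 1 -> (forall l, w l != 0 -> V l = v) ->
  \sum_(l < m) w l *: V l = v.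
Proof.
move=> sum_w1 V_v; rewrite -[RHS]scale1r -sum_w1 scaler_suml.
by apply: eq_bigr => l _; case: (eqVneq (w l) 0) => [-> | /V_v ->]; rewrite ?scale0r.
Qed.

Lemma convex_comb_gt (R : realType) m (w f : 'I_m -> R) (c : R) (l0 : 'I_m) :
  (forall l, 0 <= w l) -> \sum_(l < m) w l = 1 ->
  (forall l, c <= f l) -> w l0 != 0 -> c < f l0 ->
  c < \sum_(l < m) w l * f l.
Proof.
move=> w_ge0 sum_w1 c_le w_l0 c_lt.
rewrite -subr_gt0 -[X in _ - X]mul1r -sum_w1 mulr_suml -sumrB (bigD1 l0) //=.
apply: ltr_wpDr.
  by apply: sumr_ge0 => l _; rewrite -mulrBr mulr_ge0 ?subr_ge0.
by rewrite -mulrBr mulr_gt0 ?subr_gt0 // lt_def w_l0 w_ge0.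
Qed.

Lemma rdot_sumZ (R : realType) d m (c : 'rV[R]_d) (w : 'I_m -> R) (V : 'I_m -> 'rV[R]_d) :
  rdot c (\sum_(l < m) w l *: V l) = \sum_(l < m) w l * rdot c (V l).
Proof.
rewrite /rdot; under eq_bigr do rewrite summxE big_distrr.
rewrite exchange_big /=; apply: eq_bigr => l _; rewrite big_distrr /=.
by apply: eq_bigr => i _; rewrite mxE mulrCA.
Qed.

Definition deg d (a : exponent d) : nat := (\sum_(i < d) a i)%N.

Definition of_tuple d m (t : d.-tuple 'I_m.+1) : exponent d :=
  [ffun i => val (tnth t i)].

(* Enumerated through tuples so that its cardinality is
   [card_partial_ord_partitions]. *)
Definition simplex d m : {fset exponent d} :=
  [fset of_tuple t | t in [set t : d.-tuple 'I_m.+1 | (\sum_(i <- t) i <= m)%N]].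

Lemma of_tuple_inj d m : injective (@of_tuple d m).
Proof.
move=> s t /ffunP eq_st; apply: eq_from_tnth => i; apply: val_inj.
by have := eq_st i; rewrite !ffunE.
Qed.

Lemma deg_of_tuple d m (t : d.-tuple 'I_m.+1) :
  deg (of_tuple t) = (\sum_(i <- t) i)%N.
Proof. by rewrite big_tuple; apply: eq_bigr => i _; rewrite ffunE. Qed.

Lemma mem_simplex d m (a : exponent d) : (a \in simplex d m) = (deg a <= m)%N.
Proof.
apply/imfsetP/idP => [[t /=] | a_m].
  by rewrite inE => t_m ->; rewrite deg_of_tuple.
have a_lt i : (a i < m.+1)%N.
  by rewrite ltnS (leq_trans _ a_m) // /deg (bigD1 i) //= leq_addr.
exists [tuple Ordinal (a_lt i) | i < d]; rewrite /= ?inE.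
  by rewrite -deg_of_tuple /deg; under eq_bigr do rewrite ffunE tnth_map tnth_ord_tuple.
by apply/ffunP => i; rewrite ffunE tnth_map tnth_ord_tuple.
Qed.

Lemma card_simplex d m : #|` simplex d m| = 'C(d + m, d).
Proof.
rewrite card_imfset /=; last exact: of_tuple_inj.
by rewrite -card_partial_ord_partitions -card_finset [in RHS]card_imfset.
Qed.

Lemma simplex_corner_cut (R : realType) d m :
  (0 < d)%N -> corner_cut R d (simplex d m).
Proof.
move=> d_gt0; apply: (@corner_cut_level R d (fun=> 1%N) m).
  by exists (Ordinal d_gt0).
by move=> a; rewrite mem_simplex /deg; under [in RHS]eq_bigr do rewrite mul1n.
Qed.

Lemma rdot1_alphabar (R : realType) d (L : {fset exponent d}) :
  rdot (const_mx 1) (alphabar R d L) = (\sum_(a <- L) deg a)%N%:R.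
Proof.
rewrite /rdot natr_sum (eq_bigr (fun i => \sum_(a <- L) (a i)%:R)).
  by rewrite exchange_big; apply: eq_bigr => a _; rewrite /deg natr_sum.
by move=> i _; rewrite !mxE mul1r.
Qed.

Definition axis_point d (i : 'I_d) (t : nat) : exponent d :=
  [ffun j => if j == i then t else 0%N].

Definition axis_segment d (i : 'I_d) (n : nat) : {fset exponent d} :=
  [fset axis_point i t | t in iota 0 n].

Lemma axis_point_inj d (i : 'I_d) : injective (axis_point i).
Proof. by move=> s t /ffunP /(_ i); rewrite !ffunE eqxx. Qed.

Lemma mem_axis_segment d (i : 'I_d) n (a : exponent d) :
  a \in axis_segment i n <-> (forall j, j != i -> a j = 0%N) /\ (a i < n)%N.
Proof.
split.
  case/imfsetP => t /=; rewrite mem_iota add0n => t_lt ->.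
  split=> [j /negbTE j_neq_i|]; by rewrite ffunE ?j_neq_i ?eqxx.
case=> a_axis a_lt; apply/imfsetP; exists (a i); first by rewrite /= mem_iota.
by apply/ffunP => j; rewrite ffunE; case: eqVneq => [-> // | /a_axis].
Qed.

Lemma card_axis_segment d (i : 'I_d) n : #|` axis_segment i n| = n.
Proof.
by rewrite card_imfset /= ?undup_id ?iota_uniq ?size_iota //; exact: axis_point_inj.
Qed.

(* Any step off the axis already has weight n. *)
Lemma axis_segment_corner_cut (R : realType) d (i : 'I_d) n :
  (0 < n)%N -> corner_cut R d (axis_segment i n).
Proof.
move=> n_gt0; pose w j : nat := if j == i then 1%N else n.
apply: (@corner_cut_level R d w n.-1); first by exists i; rewrite /w eqxx.
move=> a; have -> : (\sum_j w j * a j = a i + n * \sum_(j | j != i) a j)%N.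
  rewrite (bigD1 i) //= /w eqxx mul1n big_distrr /=; congr addn.
  by apply: eq_bigr => j /negbTE ->.
apply/idP/idP => [/mem_axis_segment [a_axis a_lt] | a_le].
  by rewrite big1 ?muln0 ?addn0 // -ltnS prednK.
have rest0 : (\sum_(j | j != i) a j = 0)%N.
  move: a_le; case: (\sum_(j | j != i) a j) => // s.
  rewrite -ltnS prednK // => /(leq_ltn_trans (leq_addl _ _)).
  by rewrite ltnNge leq_pmulr.
apply/mem_axis_segment; split=> [j j_neq_i|].
  by move/eqP: rest0; rewrite sum_nat_eq0 => /forall_inP /(_ j j_neq_i) /eqP.
by move: a_le; rewrite rest0 muln0 addn0 -ltnS prednK.
Qed.

Lemma staircase_on_axis d (i : 'I_d) (L : {fset exponent d}) :
  staircase L -> (forall a, a \in L -> forall j, j != i -> a j = 0%N) ->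
  L = axis_segment i #|` L|.
Proof.
move=> stairL L_axis.
have a_lt a : a \in L -> (a i < #|` L|)%N.
  move=> aL; rewrite -[(a i).+1](card_axis_segment i); apply: fsubset_leq_card.
  apply/fsubsetP => b /mem_axis_segment [b_axis b_lt]; apply: (stairL a) => // j.
  by case: (eqVneq j i) => [-> | /b_axis ->] //; rewrite -ltnS.
apply/fsetP; apply/fsubset_cardP; first by rewrite card_axis_segment.
by apply/fsubsetP => a aL; apply/mem_axis_segment; split; [exact: L_axis | exact: a_lt].
Qed.

Lemma alphabar_axis_segment (R : realType) d (i : 'I_d) n :
  alphabar R d (axis_segment i n) = 'C(n, 2)%:R *: delta_mx 0 i.
Proof.
apply/rowP => j; rewrite !mxE big_imfset /=; last by move=> s t _ _ /axis_point_inj.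
rewrite undup_id ?iota_uniq //.
case: eqVneq => [-> | j_neq_i]; last first.
  by rewrite big1 ?mulr0 // => t _; rewrite ffunE (negbTE j_neq_i).
rewrite mulr1 -bin2_sum natr_sum /index_iota subn0; apply: eq_bigr => t _.
by rewrite ffunE eqxx.
Qed.

Lemma in_CC_on_axisP (R : realType) n d (i : 'I_d) (x : 'rV[R]_d) : (0 < n)%N ->
  (in_CC R n d x /\ (forall j, j != i -> x 0 j = 0)) <-> x = 'C(n, 2)%:R *: delta_mx 0 i.
Proof.
move=> n_gt0; split; last first.
  move=> ->; split; last by move=> j j_neq_i; rewrite !mxE (negbTE j_neq_i) andbF mulr0.
  rewrite -alphabar_axis_segment; apply: in_CC_alphabar; last exact: card_axis_segment.
  exact: axis_segment_corner_cut.
case=> [[m [Ls [w [ccLs [w_ge0 [sum_w1 ->]]]]]] x_axis].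
apply: convex_comb_const => // l w_l; have [[stairL _] cardL] := ccLs l.
rewrite -alphabar_axis_segment -cardL -staircase_on_axis // => a aL j j_neq_i.
have term_ge0 l' : 0 <= w l' * alphabar R d (Ls l') 0 j.
  by rewrite mulr_ge0 // mxE sumr_ge0.
have := x_axis j j_neq_i; rewrite summxE; under eq_bigr do rewrite mxE.
move/psumr_eq0P => /(_ (fun l' _ => term_ge0 l') l isT) /eqP.
rewrite mulf_eq0 (negbTE w_l) mxE -natr_sum pnatr_eq0 sum_nat_seq_eq0.
by move=> /allP /(_ a aL) /eqP.
Qed.

Lemma simplex_is_vertex (R : realType) d m : (0 < d)%N ->
  is_vertex_CC R 'C(d + m, d) d (alphabar R d (simplex d m)).
Proof.
move=> d_gt0; set S := simplex d m.
split; first by apply: in_CC_alphabar; [exact: simplex_corner_cut | exact: card_simplex].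
exists (const_mx 1) => x [k [Ls [w [ccLs [w_ge0 [sum_w1 ->]]]]]] x_neq.
have deg_lt l : Ls l != S -> (\sum_(a <- S) deg a < \sum_(a <- Ls l) deg a)%N.
  by apply: sum_lt_level_set; [exact: mem_simplex | rewrite (ccLs l).2 card_simplex].
have deg_le l : (\sum_(a <- S) deg a <= \sum_(a <- Ls l) deg a)%N.
  by case: (eqVneq (Ls l) S) => [-> // | /deg_lt /ltnW].
case: (pickP (fun l => (w l != 0) && (Ls l != S))) => [l0 /andP [w_l0 neq_l0] | all_S].
  rewrite rdot_sumZ; apply: (convex_comb_gt w_ge0 sum_w1 _ w_l0).
    by move=> l; rewrite !rdot1_alphabar ler_nat.
  by rewrite !rdot1_alphabar ltr_nat deg_lt.
case/eqP: x_neq; apply: convex_comb_const => // l w_l.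
by move: (all_S l) => /= /negbT; rewrite negb_and w_l negbK => /eqP ->.
Qed.

Theorem lemma2 (R : realType) (n d : nat) (hn : (1 <= n)%N) (hd : (1 <= d)%N) :
  (forall (i : 'I_d) (x : 'rV[R]_d),
      (in_CC R n d x /\ (forall j : 'I_d, j != i -> x 0 j = 0)) <->
      x = ('C(n, 2))%:R *: delta_mx 0 i)
  /\
  (forall k : nat, (1 <= k)%N -> n = 'C(k + d - 1, d) ->
     exists L : {fset exponent d},
       (forall a : exponent d, a \in L <-> (\sum_(i < d) a i <= k - 1)%N) /\
       corner_cut R d L /\ #|` L| = n /\ is_vertex_CC R n d (alphabar R d L)).
Proof.
split=> [i x | k k_gt0 n_eq]; first exact: in_CC_on_axisP.
have -> : n = 'C(d + k.-1, d) by rewrite n_eq addnC -subn1 addnBA.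
exists (simplex d k.-1); split=> [a|]; first by rewrite mem_simplex subn1.
split; first exact: simplex_corner_cut.
by split; [exact: card_simplex | exact: simplex_is_vertex].
Qed.
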